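(* In the Core Tuplix Calculus $\mathbf{CTC}$ over a nonempty attribute set $A$ and a non-trivial cancellation meadow $\mathcal{D}$ (defined in the context), for all data terms $p$ and $q$: if $\mathcal{D}\models (1-p/p)\cdot q=0$, then $\mathbf{CTC}\vdash \gamma(p)=\gamma(p)\oplus\gamma(q)$.
   Context: Data: a meadow is a commutative ring with unit with a total unary operation $(\cdot)^{-1}$ satisfying $(u^{-1})^{-1}=u$ and $u\cdot(u\cdot u^{-1})=u$; a non-trivial cancellation meadow additionally satisfies $0\neq 1$ and the cancellation law ($u\neq 0$ and $uv=uw$ imply $v=w$). Fix such a structure $\mathcal{D}$. Data terms are built from data variables ($u,v,w,\dots$), constants $0,1$, binary $+,\cdot$ and unary $-$, $(\cdot)^{-1}$; write $p/q$ for $p\cdot q^{-1}$ and $p-q$ for $p+(-q)$; $\mathcal{D}\models p=q$ means the identity holds for all valuations of the data variables in $\mathcal{D}$. Fix a nonempty set $A$ of attributes. Tuplix terms are built from tuplix variables, constants $\epsilon$ and $\delta$, entries $a(p)$ ($a\in A$, $p$ a data term), zero tests $\gamma(p)$, and the binary operator $\oplus$. $\mathbf{CTC}$ is the two-sorted equational proof system with axioms (T1) $x\oplus y=y\oplus x$; (T2) $(x\oplus y)\oplus z=x\oplus(y\oplus z)$; (T3) $x\oplus\epsilon=x$; (T4) $x\oplus\delta=\delta$; (T5) $a(u)\oplus a(v)=a(u+v)$; (T6) $\gamma(u)=\gamma(u/u)$; (T7) $\gamma(0)=\epsilon$; (T8) $\gamma(1)=\delta$; (T9) $\gamma(u)\oplus\gamma(v)=\gamma(u/u+v/v)$;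 (T10) $\gamma(u-v)\oplus a(u)=\gamma(u-v)\oplus a(v)$ (for all $a\in A$), together with the rule (DE): for all data terms $p,q$, if $\mathcal{D}\models p=q$ then $\gamma(p)=\gamma(q)$ is derivable. *)

From HB Require Import structures.
From mathcomp Require Import all_boot all_algebra.
Set Implicit Arguments. Unset Strict Implicit. Unset Printing Implicit Defensive.
Import GRing.Theory.
Local Open Scope ring_scope.

Definition is_meadow (D : comPzRingType) (inv : D -> D) : Prop :=
  (forall u : D, inv (inv u) = u) /\ (forall u : D, u * (u * inv u) = u).

Definition is_nt_cancellation_meadow (D : comPzRingType) (inv : D -> D) : Prop :=
  is_meadow inv /\ (0 : D) <> 1 /\
  (forall u v w : D, u <> 0 -> u * v = u * w -> v = w).

Inductive dterm : Type :=
| dvar : nat -> dterm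
| dzero : dterm
| done : dterm
| dadd : dterm -> dterm -> dterm
| dmul : dterm -> dterm -> dterm
| dopp : dterm -> dterm
| dinv : dterm -> dterm.

Definition ddiv (p q : dterm) : dterm := dmul p (dinv q).
Definition dsub (p q : dterm) : dterm := dadd p (dopp q).

Fixpoint deval (D : comPzRingType) (inv : D -> D) (rho : nat -> D) (p : dterm) : D :=
  match p with
  | dvar n => rho n
  | dzero => 0
  | done => 1
  | dadd p q => deval inv rho p + deval inv rho q
  | dmul p q => deval inv rho p * deval inv rho q
  | dopp p => - deval inv rho p
  | dinv p => inv (deval inv rho p)
  end.

Definition dmodels (D : comPzRingType) (inv : D -> D) (p q : dterm) : Prop :=
  forall rho : nat -> D, deval inv rho p = deval inv rho q.

Inductive tterm (A : Type) : Type :=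
| tvar : nat -> tterm A
| teps : tterm A
| tdelta : tterm A
| tentry : A -> dterm -> tterm A
| tgamma : dterm -> tterm A
| toplus : tterm A -> tterm A -> tterm A.
Arguments teps {A}.
Arguments tdelta {A}.
Arguments tvar {A}.
Arguments tgamma {A}.

Inductive ctc (D : comPzRingType) (inv : D -> D) (A : Type) :
    tterm A -> tterm A -> Prop :=
| ctc_refl x : ctc inv x x
| ctc_sym x y : ctc inv x y -> ctc inv y x
| ctc_trans x y z : ctc inv x y -> ctc inv y z -> ctc inv x z
| ctc_cong x x' y y' : ctc inv x x' -> ctc inv y y' ->
    ctc inv (toplus x y) (toplus x' y')
| T1 x y : ctc inv (toplus x y) (toplus y x)
| T2 x y z : ctc inv (toplus (toplus x y) z) (toplus x (toplus y z))
| T3 x : ctc inv (toplus x teps) x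
| T4 x : ctc inv (toplus x tdelta) tdelta
| T5 (a : A) u v : ctc inv (toplus (tentry a u) (tentry a v)) (tentry a (dadd u v))
| T6 u : ctc inv (tgamma u) (tgamma (ddiv u u))
| T7 : ctc inv (tgamma dzero) teps
| T8 : ctc inv (tgamma done) tdelta
| T9 u v : ctc inv (toplus (tgamma u) (tgamma v))
                   (tgamma (dadd (ddiv u u) (ddiv v v)))
| T10 (a : A) u v : ctc inv (toplus (tgamma (dsub u v)) (tentry a u))
                           (toplus (tgamma (dsub u v)) (tentry a v))
| DE p q : dmodels inv p q -> ctc inv (tgamma p) (tgamma q).

(* In a non-trivial cancellation meadow [u / u] is [1] when [u <> 0] and [0]
   otherwise, so the hypothesis says that [q] vanishes wherever [p] does.
   By T6 and T9, [gamma(p) (+) gamma(q)] is [gamma(s / s)] with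
   [s = p/p + q/q], and [s / s = p / p] pointwise as soon as [1 + 1 <> 0].
   In characteristic two, [gamma(0) = gamma(1/1 + 1/1) = delta (+) delta = delta]
   and the calculus identifies all tuplix terms. *)

From mathcomp Require Import all_boot all_algebra.
Import GRing.Theory.
Local Open Scope ring_scope.

Section Meadow.
Variables (D : comPzRingType) (inv : D -> D).

Lemma meadow_inv1 : is_meadow inv -> inv 1 = 1.
Proof. by case=> _ /(_ 1); rewrite !mul1r. Qed.

Hypothesis HD : is_nt_cancellation_meadow inv.

Lemma meadow_divff (u : D) : u * inv u = (u != 0)%:R.
Proof.
have [-> | /eqP u_neq0] := eqVneq u 0; first by rewrite mul0r.
case: HD => [[_ mulKV] [_ cancel]]; apply: (cancel u) => //.
by rewrite mulKV mulr1.
Qed.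

Lemma meadow_divff_absorb (a b : D) :
  1 + 1 != 0 :> D -> (1 - a * inv a) * b = 0 ->
  let s := a * inv a + b * inv b in s * inv s = a * inv a.
Proof.
move=> two_neq0; rewrite /= !meadow_divff.
have [_ | _] := eqVneq a 0.
  by rewrite /= subr0 mul1r => ->; rewrite eqxx /= addr0 eqxx.
have /negPf one_neq0 : 1 != 0 :> D by case: HD => _ [/nesym/eqP].
by case: (b != 0); rewrite /= ?addr0 ?one_neq0 ?(negPf two_neq0).
Qed.

End Meadow.

Section Derivations.
Variables (D : comPzRingType) (inv : D -> D) (A : Type).

Lemma ctc_collapse (x y : tterm A) : ctc inv (teps : tterm A) tdelta -> ctc inv x y.
Proof.
have to_delta (z : tterm A) : ctc inv (teps : tterm A) tdelta -> ctc inv z tdelta.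
  move=> eps_delta; apply: ctc_trans (ctc_sym (T3 inv z)) (ctc_trans _ (T4 inv z)).
  exact: ctc_cong (ctc_refl _ _) eps_delta.
by move=> eps_delta; apply: ctc_trans (to_delta x _) (ctc_sym (to_delta y _)).
Qed.

Lemma ctc_eps_delta_char2 :
  is_meadow inv -> 1 + 1 = 0 :> D -> ctc inv (teps : tterm A) tdelta.
Proof.
move=> Hm two_eq0; apply: ctc_trans (ctc_sym (T7 inv A)) _.
apply: ctc_trans (ctc_trans (ctc_sym (T9 inv A done done)) _).
  by apply: DE => rho /=; rewrite meadow_inv1 // mulr1.
exact: ctc_trans (ctc_cong (T8 inv A) (T8 inv A)) (T4 inv tdelta).
Qed.

Lemma ctc_gamma_oplus (u v : dterm) :
  let s := dadd (ddiv u u) (ddiv v v) in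
  ctc inv (toplus (tgamma u) (tgamma v) : tterm A) (tgamma (ddiv s s)).
Proof. exact: ctc_trans (T9 inv A u v) (T6 inv A _). Qed.

End Derivations.

Theorem lemma2 (D : comPzRingType) (inv : D -> D) (A : Type)
  (HD : is_nt_cancellation_meadow inv) (HA : inhabited A) (p q : dterm) :
  dmodels inv (dmul (dsub done (ddiv p p)) q) dzero ->
  ctc inv (tgamma p : tterm A) (toplus (tgamma p) (tgamma q)).
Proof.
move=> q_vanishes.
have [two_eq0 | two_neq0] := eqVneq (1 + 1 : D) 0.
  by apply/ctc_collapse/ctc_eps_delta_char2 => //; case: HD.
apply: ctc_trans (T6 inv A p) (ctc_sym (ctc_trans (ctc_gamma_oplus D inv A p q) _)).
apply: DE => rho; apply: meadow_divff_absorb => //; apply: q_vanishes.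
Qed.
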